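(* Let $(\lambda,\vartheta,\zeta_0)$ be fluid model data as in the context with $z_0>0$, and suppose $F_0(x,y)=\mathbf P(B^0\ge x;D^0\ge y)$ satisfies $|F_0(x,y)-F_0(x,y')|\le L|y-y'|$ for all $x,y,y'$. Let $\zeta(\cdot)$ be a measure valued fluid model solution with total mass $z(\cdot)$, let $S(0,s)=\int_0^sz(u)^{-1}du$, $\widetilde S(t)=\inf\{s:S(0,s)\ge t\}$, and $\widetilde\zeta(t)(x,y)=\zeta(\widetilde S(t))([x,\infty]\times[y,\infty])$. Then for all $x,y,y'\ge0$ and all $t\ge0$, $$|\widetilde\zeta(t)(x,y)-\widetilde\zeta(t)(x,y')|\le(z_0L+\lambda)|y-y'|.$$
   Context: $\overline{\mathbb R}_+=[0,\infty]$; $\mathbf M_1$ the finite nonnegative Borel measures on $\overline{\mathbb R}_+^2$ with the weak topology. Fluid model data: $\lambda>0$; $\vartheta$ a Borel probability measure on $\overline{\mathbb R}_+^2$ with $\vartheta(\{0\}\times\overline{\mathbb R}_+)=\vartheta(\overline{\mathbb R}_+\times\{0\})=\vartheta(\{(\infty,\infty)\})=0$, $(B,D)$ a random pair with law $\vartheta$, $\rho=\lambda\mathbf E[B]>1$; $\zeta_0\in\mathbf M_1$ with marginals free of atoms in $[0,\infty)$, total mass $z_0$, and $(B^0,D^0)$ with law $\zeta_0/z_0$. Corner sets $\mathcal C=\{[x,\infty)\times[y,\infty):x,y\in[0,\infty)\}\cup\{[x,\infty]\times[y,\infty]:x,y\in\overline{\mathbb R}_+\}$. A measure valued fluid model solution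 is a continuous $\zeta:[0,\infty)\to\mathbf M_1$ with total mass $z(t)$, $S(u,v)=\int_u^vz(s)^{-1}ds$, such that $\inf_{t>a}z(t)>0$ for all $a>0$ and $\zeta(t)(C)=\zeta_0(C+(S(0,t),t))+\lambda\int_0^t\vartheta(C+(S(s,t),t-s))ds$ for $C\in\mathcal C$, $t\ge0$ ($A+w=\{a+w:a\in A\}$). *)

From HB Require Import structures.
From mathcomp Require Import all_boot all_order all_algebra.
From mathcomp Require Import all_classical all_reals all_analysis.
From mathcomp Require Import measurable_realfun.
Set Implicit Arguments. Unset Strict Implicit. Unset Printing Implicit Defensive.
Import Order.TTheory GRing.Theory Num.Theory.
Import numFieldNormedType.Exports.
Local Open Scope classical_set_scope.
Local Open Scope ring_scope.

Notation ST R := (\bar R * \bar R)%type.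

Definition Rp2 (R : realType) : set (ST R) :=
  [set p | (0 <= p.1)%E /\ (0 <= p.2)%E].

Definition corner (R : realType) (C : set (ST R)) : Prop :=
  (exists x y : R, 0 <= x /\ 0 <= y /\
     C = [set p | (x%:E <= p.1 < +oo)%E /\ (y%:E <= p.2 < +oo)%E])
  \/
  (exists x y : \bar R, (0 <= x)%E /\ (0 <= y)%E /\
     C = [set p | (x <= p.1)%E /\ (y <= p.2)%E]).

Definition shift (R : realType) (C : set (ST R)) (a b : R) : set (ST R) :=
  [set ((p.1 + a%:E)%E, (p.2 + b%:E)%E) | p in C].

Definition closed_corner (R : realType) (x y : R) : set (ST R) :=
  [set p | (x%:E <= p.1)%E /\ (y%:E <= p.2)%E].

Definition mass (R : realType) (zeta : R -> {finite_measure set (ST R) -> \bar R})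
  (t : R) : R := fine (zeta t setT).

Definition Sfun (R : realType) (zeta : R -> {finite_measure set (ST R) -> \bar R})
  (u v : R) : R :=
  fine (\int[@lebesgue_measure R]_(s in `[u, v]) ((mass zeta s)^-1)%:E)%E.

Definition weakly_continuous (R : realType)
  (zeta : R -> {finite_measure set (ST R) -> \bar R}) : Prop :=
  forall f : ST R -> R,
    measurable_fun setT f ->
    {within @Rp2 R, continuous f} ->
    (exists M : R, forall p, `|f p| <= M) ->
    {within [set t : R | 0 <= t],
       continuous (fun t => fine (\int[zeta t]_(p in @Rp2 R) (f p)%:E)%E)}.

Definition fluid_solution (R : realType) (lambda : R)
  (theta : probability (ST R) R) (zeta0 : {finite_measure set (ST R) -> \bar R})
  (zeta : R -> {finite_measure set (ST R) -> \bar R}) : Prop :=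
  (forall t, 0 <= t -> zeta t (~` @Rp2 R) = 0%E) /\
  weakly_continuous zeta /\
  (forall a : R, 0 < a -> exists c : R, 0 < c /\ forall t, a < t -> c <= mass zeta t) /\
  (forall C t, corner C -> 0 <= t ->
     zeta t C =
       (zeta0 (shift C (Sfun zeta 0%R t) t) +
        lambda%:E * \int[@lebesgue_measure R]_(s in `[0%R, t])
                      theta (shift C (Sfun zeta s t) (t - s)%R))%E).

Definition fluid_data (R : realType) (lambda : R)
  (theta : probability (ST R) R) (zeta0 : {finite_measure set (ST R) -> \bar R}) : Prop :=
  0 < lambda /\
  theta (~` @Rp2 R) = 0%E /\
  theta [set p | p.1 = 0%E] = 0%E /\
  theta [set p | p.2 = 0%E] = 0%E /\
  theta [set (+oo%E, +oo%E)] = 0%E /\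
  (1 < lambda%:E * \int[theta]_(p in @Rp2 R) p.1)%E /\
  zeta0 (~` @Rp2 R) = 0%E /\
  (forall x : R, 0 <= x -> zeta0 [set p | p.1 = x%:E] = 0%E) /\
  (forall x : R, 0 <= x -> zeta0 [set p | p.2 = x%:E] = 0%E).

Definition Stilde (R : realType) (zeta : R -> {finite_measure set (ST R) -> \bar R})
  (t : R) : R := inf [set s : R | 0 <= s /\ t <= Sfun zeta 0 s].

From Pilot Require Import Defs.
From HB Require Import structures.
From mathcomp Require Import all_boot all_order all_algebra.
From mathcomp Require Import all_classical all_reals all_analysis.
From mathcomp Require Import measurable_realfun.
From mathcomp Require Import ring lra.
Set Implicit Arguments. Unset Strict Implicit. Unset Printing Implicit Defensive.
Import Order.TTheory GRing.Theory Num.Theory.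
Import numFieldNormedType.Exports.
Local Open Scope classical_set_scope.
Local Open Scope ring_scope.

(** The corner mass of zeta(T) splits, by the fluid model equation, into
   zeta0(C(x + S(0,T), y + T)), which is z0 L-Lipschitz in y by hypothesis,
   and lambda times the integral over s in [0,T] of
   theta(C(x + S(s,T), y + T - s)).  Raising y to y + d lowers that integrand
   by at most psi(s) - psi(s - d), where psi(s) = theta(D >= y + T - s) is
   nondecreasing with values in [0,1]; the integral of such a difference over
   any interval is at most d, as one sees by bounding the integrand on a grid
   of mesh d/N by a telescoping step function and letting N grow.  The
   integrand is measurable because s |-> S(s,T) is antitone, which needs the
   total mass to be bounded below on [0,oo): near 0 by weak continuity and
   z(0) = z0 > 0, and beyond by the definition of a fluid model solution.
   Nothing about Stilde t is used except Stilde t >= 0. *)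

Section corners.
Variable R : realType.

Lemma measurable_ecorner (a b : \bar R) :
  measurable [set p : ST R | (a <= p.1)%E /\ (b <= p.2)%E].
Proof.
have ray c : measurable [set x : \bar R | (c <= x)%E].
  rewrite (_ : [set x | _] = [set` Interval (BLeft c) (BRight +oo%E)]).
    exact: emeasurable_itv.
  by apply/seteqP; split => x /=; rewrite in_itv /= leey andbT.
exact: measurableX (ray a) (ray b).
Qed.

Lemma measurable_closed_corner (x y : R) : measurable (closed_corner x y).
Proof. exact: measurable_ecorner. Qed.

Definition snd_ge (v : R) : set (ST R) := [set p | (v%:E <= p.2)%E].

Lemma measurable_snd_ge (v : R) : measurable (snd_ge v).
Proof.
rewrite (_ : snd_ge v = [set p | (-oo <= p.1)%E /\ (v%:E <= p.2)%E]).
  exact: measurable_ecorner.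
by apply/seteqP; split => [p vp | p []//]; split => //; exact: leNye.
Qed.

Lemma snd_ge_antitone (u v : R) : u <= v -> snd_ge v `<=` snd_ge u.
Proof. by move=> uv p /=; apply: le_trans; rewrite lee_fin. Qed.

Lemma closed_corner_antitone (a b a' b' : R) : a' <= a -> b' <= b ->
  closed_corner a b `<=` closed_corner a' b'.
Proof.
by move=> aa bb p [pa pb]; split; [apply: le_trans pa | apply: le_trans pb];
  rewrite lee_fin.
Qed.

Lemma shift_closed_corner (x y u v : R) :
  Defs.shift (closed_corner x y) u v = closed_corner (x + u) (y + v).
Proof.
apply/seteqP; split.
  by move=> _ [p [px py] <-]; split; rewrite /= EFinD leeD2r.
move=> [p1 p2] [/= p1x p2y]; exists ((p1 - u%:E)%E, (p2 - v%:E)%E).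
  by split; rewrite /= EFinN leeBrDr // -EFinD.
by rewrite /= !EFinN !subeK.
Qed.

Lemma corner_closed_corner (x y : R) : 0 <= x -> 0 <= y -> corner (closed_corner x y).
Proof. by move=> x0 y0; right; exists x%:E, y%:E; rewrite !lee_fin. Qed.

Lemma closed_corner_diff_subset (a b b' : R) :
  closed_corner a b `\` closed_corner a b' `<=` snd_ge b `\` snd_ge b'.
Proof. by move=> p [[pa pb] Cp]; split => // pb'; exact: Cp. Qed.

Lemma measurable_Rp2 : measurable (@Rp2 R).
Proof. exact: measurable_ecorner. Qed.

End corners.

Section finite_measure.
Context d (T : measurableType d) (R : realType).

Lemma fine_measure_sub (mu : {finite_measure set T -> \bar R}) (A B : set T) :
  measurable A -> measurable B -> B `<=` A ->
  fine (mu A) - fine (mu B) = fine (mu (A `\` B)).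
Proof.
move=> mA mB BA; rewrite (measureDI mu mA mB) (setIidr BA).
by rewrite fineD ?fin_num_measure ?addrK //; exact: measurableD.
Qed.

Lemma fine_probability01 (P : probability T R) (A : set T) :
  measurable A -> 0 <= fine (P A) <= 1.
Proof.
move=> mA; rewrite fine_ge0 ?measure_ge0 //=.
by rewrite -lee_fin fineK ?fin_num_measure // probability_le1.
Qed.

Lemma measure_setT_null_compl (mu : {measure set T -> \bar R}) (A : set T) :
  measurable A -> mu (~` A) = 0%E -> mu setT = mu A.
Proof.
move=> mA A'0; rewrite (measureDI mu measurableT mA) setTD setTI.
by rewrite -[RHS]add0e; congr (_ + _)%E.
Qed.

End finite_measure.

Lemma measure_closed_corner_diff (R : realType)
    (mu : {finite_measure set (ST R) -> \bar R}) (a b b' : R) : b <= b' ->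
  fine (mu (closed_corner a b)) - fine (mu (closed_corner a b')) <=
  fine (mu (snd_ge b)) - fine (mu (snd_ge b')).
Proof.
move=> bb'; have mC := @measurable_closed_corner R.
have mH := @measurable_snd_ge R.
rewrite !fine_measure_sub //; last 2 first.
- exact: snd_ge_antitone.
- exact: closed_corner_antitone.
apply: fine_le; rewrite ?fin_num_measure //; try exact: measurableD.
by apply: le_measure; rewrite ?inE; [exact: measurableD..|];
  exact: closed_corner_diff_subset.
Qed.

Section nonneg_integral.
Context d (T : measurableType d) (R : realType) (mu : {measure set T -> \bar R}).
Local Open Scope ereal_scope.

(* Unlike [ge0_le_integral], no measurability is needed: a nonnegative
   integral is a supremum over simple minorants. *)
Lemma ge0_le_integral_nomeas (D : set T) (f g : T -> \bar R) :
  (forall x, D x -> 0 <= f x) -> (forall x, D x -> f x <= g x) ->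
  \int[mu]_(x in D) f x <= \int[mu]_(x in D) g x.
Proof.
move=> f0 fg; rewrite !ge0_integralE //; last first.
  by move=> x Dx; apply: le_trans (fg x Dx); exact: f0.
apply: ereal_sup_le => _ [h hf <-]; exists h => // x.
apply: le_trans (hf x) _; rewrite /patch; case: ifP => // /[!inE] Dx.
exact: fg.
Qed.

Lemma ge0_subset_integral_nomeas (A B : set T) (f : T -> \bar R) :
  A `<=` B -> (forall x, B x -> 0 <= f x) ->
  \int[mu]_(x in A) f x <= \int[mu]_(x in B) f x.
Proof.
move=> AB f0; rewrite (integral_mkcond A) (integral_mkcond B).
apply: ge0_le_integral_nomeas => x _; rewrite /patch.
  by case: ifP => // /[!inE] Ax; exact/f0/AB.
have [/[!inE] Ax|_] := boolP (x \in A); first by rewrite ifT ?inE //; exact: AB.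
by case: ifP => // /[!inE]; exact: f0.
Qed.

End nonneg_integral.

Lemma bounded_integral_itv_fin (R : realType) (f : R -> \bar R) (a b M : R) :
  {in `[a, b], forall s, (0 <= f s <= M%:E)%E} ->
  (\int[lebesgue_measure]_(s in `[a, b]) f s)%E \is a fin_num.
Proof.
move=> fM; rewrite ge0_fin_numE; last by apply: integral_ge0 => s /fM /andP[].
apply: le_lt_trans (_ : \int[lebesgue_measure]_(s in `[a, b]) cst M%:E s < +oo)%E.
  by apply: ge0_le_integral_nomeas => s /fM /andP[].
rewrite integral_cst //= lebesgue_measure_itv /=.
by case: ifP => _; rewrite ?mule0 // -EFinD -EFinM ltry.
Qed.

Lemma integral_grid_step_le (R : realType) (D : set R) (h : R)
    (beta : nat -> R) (M : nat) : measurable D -> 0 < h -> (forall j, 0 <= beta j) ->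
  (\int[lebesgue_measure]_(s in D)
     (\sum_(j < M) beta j * \1_[set` `[j%:R * h, j.+1%:R * h[] s)%:E
   <= (\sum_(j < M) beta j * h)%:E)%E.
Proof.
move=> mD h0 beta0; have mJ (j : nat) := @measurable_itv R `[j%:R * h, j.+1%:R * h[.
have mstep j : measurable_fun D
    (fun s => (beta j * \1_[set` `[j%:R * h, j.+1%:R * h[] s)%:E).
  by apply/measurable_EFinP/measurable_funM => //; exact: measurable_indic.
under eq_integral do rewrite -sumEFin.
rewrite ge0_integral_sum // -?sumEFin; first last.
- by move=> j s _; rewrite lee_fin mulr_ge0 // indicE ler0n.
- by move=> j; exact: mstep.
apply: lee_sum => j _; under eq_integral do rewrite EFinM.
rewrite ge0_integralZl ?lee_fin //; last first.
  by apply/measurable_EFinP; exact: measurable_indic.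
rewrite integral_indic // EFinM lee_wpmul2l ?lee_fin //.
apply: (@le_trans _ _ (lebesgue_measure [set` `[j%:R * h, j.+1%:R * h[])).
  by apply: le_measure; rewrite ?inE //; exact: measurableI.
rewrite lebesgue_measure_itv /= lte_fin ltr_pM2r // ltr_nat ltnSn.
by rewrite -EFinB -mulrBl -natrB // subSnn mul1r.
Qed.

Lemma sum_shift_sub_le (R : numDomainType) (u : nat -> R) :
  {homo u : i j / (i <= j)%N >-> i <= j} -> (forall i, 0 <= u i <= 1) ->
  forall K M, \sum_(j < M) (u (j + K)%N - u j) <= K%:R.
Proof.
move=> + + K; elim: K u => [|K IH] u u_nd u01 M.
  by rewrite big1 // => j _; rewrite addn0 subrr.
have -> : \sum_(j < M) (u (j + K.+1)%N - u j) =
    \sum_(j < M) ((u (j.+1 + K)%N - u j.+1) + (u j.+1 - u j)).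
  by apply: eq_bigr => j _; rewrite addnS -addSn addrA subrK.
rewrite big_split /= -addn1 natrD lerD //.
  by apply: (IH (u \o S)) => [i j ij|i]; [apply: u_nd | apply: u01].
rewrite -(big_mkord xpredT (fun j => u j.+1 - u j)) telescope_sumr //.
by have [/andP[_ uM1] /andP[u00 _]] := (u01 M, u01 0%N); rewrite -[1]subr0 lerB.
Qed.

Section monotone_shift_integral.
Variables (R : realType) (psi : R -> R).
Hypotheses (psi_nd : {homo psi : s t / s <= t}) (psi01 : forall s, 0 <= psi s <= 1).

Lemma shift_sub_le_grid_step (h T s : R) (N : nat) : 0 < h -> 0 <= s <= T ->
  psi s - psi (s - N%:R * h) <= \sum_(j < (Num.truncn (T / h)).+1)
    (psi ((j + N.+1)%N%:R * h - N%:R * h) - psi (j%:R * h - N%:R * h)) *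
      \1_[set` `[j%:R * h, j.+1%:R * h[] s.
Proof.
move=> h0 /andP[s0 sT]; have sh0 : 0 <= s / h by rewrite divr_ge0 // ltW.
set j0 := Num.truncn (s / h).
have j0M : (j0 < (Num.truncn (T / h)).+1)%N.
  by rewrite ltnS le_truncn // ler_pM2r ?invr_gt0.
have /andP[j0s sj0] := truncn_itv sh0.
rewrite -/j0 ler_pdivlMr // in j0s; rewrite -/j0 ltr_pdivrMr // in sj0.
rewrite (bigD1 (Ordinal j0M)) //= indicE mem_set /=; last first.
  by rewrite in_itv /= j0s sj0.
apply: ler_wpDr.
  apply: sumr_ge0 => j _; rewrite mulr_ge0 // ?indicE ?ler0n //.
  by rewrite subr_ge0 psi_nd // lerD2r ler_pM2r // ler_nat leq_addr.
rewrite mulr1 lerB // psi_nd //; last lra.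
by rewrite natrD -addn1 natrD; lra.
Qed.

Lemma measurable_shift_sub (D : set R) (d : R) : measurable D ->
  measurable_fun D (fun s => (psi s - psi (s - d))%:E).
Proof.
move=> mD; apply/measurable_EFinP/measurable_funB.
  exact: nondecreasing_measurable.
by apply: nondecreasing_measurable => // s t st; rewrite psi_nd // lerD2r.
Qed.

Lemma integral_shift_sub_grid_le (h T : R) (N : nat) : 0 < h -> 0 <= T ->
  (\int[lebesgue_measure]_(s in `[0%R, T]) (psi s - psi (s - N%:R * h))%:E
   <= (N.+1%:R * h)%:E)%E.
Proof.
move=> h0 T0; pose u (k : nat) := psi (k%:R * h - N%:R * h).
have u_nd : {homo u : i j / (i <= j)%N >-> i <= j}.
  by move=> i j ij; rewrite psi_nd // lerD2r ler_pM2r // ler_nat.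
pose beta j := u (j + N.+1)%N - u j.
have beta0 j : 0 <= beta j by rewrite subr_ge0 u_nd // leq_addr.
apply: (@le_trans _ _ (\int[lebesgue_measure]_(s in `[0%R, T])
    (\sum_(j < (Num.truncn (T / h)).+1)
       beta j * \1_[set` `[j%:R * h, j.+1%:R * h[] s)%:E)%E).
  apply: ge0_le_integral => //.
  - by move=> s _; rewrite lee_fin subr_ge0 psi_nd // gerBl mulr_ge0 // ltW.
  - exact: measurable_shift_sub.
  - apply/measurable_EFinP; apply: measurable_sum => j.
    by apply: measurable_funM => //; exact: measurable_indic.
  - by move=> s sT; rewrite lee_fin; exact: shift_sub_le_grid_step.
apply: le_trans (integral_grid_step_le _ _ h0 beta0) _ => //.
rewrite lee_fin -mulr_suml ler_pM2r //.
exact: sum_shift_sub_le u_nd (fun i => psi01 _) _ _.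
Qed.

Lemma integral_shift_sub_le (d T : R) : 0 <= d -> 0 <= T ->
  (\int[lebesgue_measure]_(s in `[0%R, T]) (psi s - psi (s - d))%:E <= d%:E)%E.
Proof.
move=> d0 T0; apply/lee_addgt0Pr => e e0.
have [N [h [h0 he ->]]] : exists N h, [/\ 0 < h, h <= e & d = N%:R * h].
  have [->|dn0] := eqVneq d 0; first by exists 0%N, e; rewrite mul0r.
  exists (Num.truncn (d / e)).+1, (d / (Num.truncn (d / e)).+1%:R).
  rewrite divr_gt0 ?ltr0Sn ?lt_def ?dn0 // mulrCA divff ?mulr1 //.
  rewrite ler_pdivrMr ?ltr0Sn // -ler_pdivrMl //.
  by split => //; rewrite mulrC ltW // truncnS_gt.
apply: le_trans (integral_shift_sub_grid_le N h0 T0) _.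
by rewrite -EFinD lee_fin -addn1 natrD mulrDl mul1r lerD2l.
Qed.

End monotone_shift_integral.

Section corner_integral.
Variables (R : realType) (theta : probability (ST R) R) (sigma : R -> R) (T : R).
Hypotheses (sigma_ni : {homo sigma : s t / s <= t >-> t <= s}) (T0 : 0 <= T).

Definition corner_profile (y s : R) :=
  fine (theta (closed_corner (sigma s) (y + (T - s)))).

Definition corner_integral (y : R) :=
  fine (\int[lebesgue_measure]_(s in `[0%R, T]) (corner_profile y s)%:E)%E.

Lemma corner_profile01 y s : 0 <= corner_profile y s <= 1.
Proof. by apply: fine_probability01; exact: measurable_closed_corner. Qed.

Lemma corner_profile_antitone y y' s :
  y <= y' -> corner_profile y' s <= corner_profile y s.
Proof.
move=> yy'; apply: fine_le; rewrite ?fin_num_measure //;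
  try exact: measurable_closed_corner.
by apply: le_measure; rewrite ?inE; [exact: measurable_closed_corner..|];
  apply: closed_corner_antitone; rewrite ?lerD2r.
Qed.

Lemma measurable_corner_profile y (D : set R) : measurable D ->
  measurable_fun D (fun s => (corner_profile y s)%:E).
Proof.
move=> mD; apply/measurable_EFinP; apply: (nondecreasing_measurable mD) => s t st.
apply: fine_le; rewrite ?fin_num_measure //; try exact: measurable_closed_corner.
by apply: le_measure; rewrite ?inE; [exact: measurable_closed_corner..|];
  apply: closed_corner_antitone; [exact: sigma_ni | rewrite !lerD2l lerN2].
Qed.

Lemma corner_integral_fin y :
  (\int[lebesgue_measure]_(s in `[0%R, T]) (corner_profile y s)%:E)%E \is a fin_num.
Proof.
apply: (@bounded_integral_itv_fin _ _ _ _ 1) => s _.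
by rewrite !lee_fin corner_profile01.
Qed.

Lemma corner_integral_antitone y y' :
  y <= y' -> corner_integral y' <= corner_integral y.
Proof.
move=> yy'; apply: fine_le; rewrite ?corner_integral_fin //.
apply: ge0_le_integral_nomeas => s _; rewrite lee_fin ?corner_profile_antitone //.
by case/andP: (corner_profile01 y' s).
Qed.

Lemma corner_integral_sub_le y y' : y <= y' ->
  corner_integral y - corner_integral y' <= y' - y.
Proof.
move=> yy'; pose psi s := fine (theta (snd_ge (y + (T - s)))).
have psi_nd : {homo psi : s t / s <= t}.
  move=> s t st; apply: fine_le; rewrite ?fin_num_measure //;
    try exact: measurable_snd_ge.
  by apply: le_measure; rewrite ?inE; [exact: measurable_snd_ge..|];
    apply: snd_ge_antitone; rewrite !lerD2l lerN2.
have psi01 s : 0 <= psi s <= 1.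
  by apply: fine_probability01; exact: measurable_snd_ge.
have profile_sub_le s :
    corner_profile y s <= corner_profile y' s + (psi s - psi (s - (y' - y))).
  rewrite -lerBlDl /psi (_ : y + (T - (s - (y' - y))) = y' + (T - s)); last by ring.
  by apply: (@measure_closed_corner_diff _ theta); rewrite lerD2r.
have profile0 z s : (0 <= (corner_profile z s)%:E)%E.
  by rewrite lee_fin; case/andP: (corner_profile01 z s).
have diff0 s : (0 <= (psi s - psi (s - (y' - y)))%:E)%E.
  by rewrite lee_fin subr_ge0 psi_nd // gerBl subr_ge0.
have mitv : measurable [set` `[0%R, T]] by exact: measurable_itv.
have int_le : (\int[lebesgue_measure]_(s in `[0%R, T]) (corner_profile y s)%:E <=
    \int[lebesgue_measure]_(s in `[0%R, T]) (corner_profile y' s)%:E +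
    \int[lebesgue_measure]_(s in `[0%R, T]) (psi s - psi (s - (y' - y)))%:E)%E.
  rewrite -ge0_integralD //; last 2 first.
  - exact: measurable_corner_profile.
  - exact: measurable_shift_sub.
  apply: ge0_le_integral => //.
  - exact: measurable_corner_profile.
  - by apply: emeasurable_funD;
      [exact: measurable_corner_profile | exact: measurable_shift_sub].
  - by move=> s _; rewrite -EFinD lee_fin profile_sub_le.
have d0 : 0 <= y' - y by rewrite subr_ge0.
have := le_trans int_le (leeD2l _ (integral_shift_sub_le psi_nd psi01 d0 T0)).
rewrite -(fineK (corner_integral_fin y)) -(fineK (corner_integral_fin y')).
by rewrite -EFinD lee_fin lerBlDl.
Qed.

Lemma corner_integral_lipschitz y y' :
  `|corner_integral y - corner_integral y'| <= `|y - y'|.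
Proof.
wlog yy' : y y' / y <= y'.
  move=> wlog; have [|/ltW] := leP y y'; first exact: wlog.
  by rewrite distrC [`|y - _|]distrC; exact: wlog.
rewrite distrC [`|y - _|]distrC [`|y' - y|]ger0_norm ?subr_ge0 //.
rewrite ler_norml; have := corner_integral_sub_le yy'.
have := corner_integral_antitone yy'; lra.
Qed.

End corner_integral.

Section mass.
Variable R : realType.
Implicit Types (zeta : R -> {finite_measure set (ST R) -> \bar R}) (u v t : R).

Lemma mass_ge0 zeta t : 0 <= mass zeta t.
Proof. by rewrite fine_ge0. Qed.

Lemma Sfun_ge0 zeta u v : 0 <= Sfun zeta u v.
Proof.
by rewrite fine_ge0 // integral_ge0 // => s _; rewrite lee_fin invr_ge0 mass_ge0.
Qed.

Lemma Sfun_diag zeta u : Sfun zeta u u = 0.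
Proof.
by rewrite /Sfun (integral_Sset1 u) // => s /=; rewrite in_itv /= => /le_anti.
Qed.

Lemma Stilde_ge0 zeta t : 0 <= Stilde zeta t.
Proof.
rewrite /Stilde; set E := [set s | _].
have [->|/set0P[s Es]] := eqVneq E set0; first by rewrite inf0.
by apply: lb_le_inf; [exists s | move=> u []].
Qed.

End mass.

Section mass_bounded_below.
Variables (R : realType) (zeta : R -> {finite_measure set (ST R) -> \bar R}) (m : R).
Hypotheses (m_gt0 : 0 < m) (mass_ge : forall t, 0 <= t -> m <= mass zeta t).

Lemma inv_mass_integral_fin (u v : R) : 0 <= u ->
  (\int[lebesgue_measure]_(s in `[u, v]) ((mass zeta s)^-1)%:E)%E \is a fin_num.
Proof.
move=> u0; apply: (@bounded_integral_itv_fin _ _ _ _ m^-1) => s.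
rewrite in_itv /= => /andP[us _]; have ms := mass_ge (le_trans u0 us).
by rewrite !lee_fin invr_ge0 mass_ge0 lef_pV2 ?posrE // (lt_le_trans m_gt0).
Qed.

Lemma Sfun_antitone (u u' v : R) :
  0 <= u -> u <= u' -> Sfun zeta u' v <= Sfun zeta u v.
Proof.
move=> u0 uu'; apply: fine_le; rewrite ?inv_mass_integral_fin ?(le_trans u0) //.
apply: ge0_subset_integral_nomeas.
  by apply: subset_itvr; rewrite bnd_simp.
by move=> s _; rewrite lee_fin invr_ge0 mass_ge0.
Qed.

(* Clamping at 0 makes [s |-> S(s,v)] antitone on all of R, which is what
   [nondecreasing_measurable] asks for. *)
Lemma Sfun_max0_antitone (v : R) :
  {homo (fun s => Sfun zeta (Num.max 0 s) v) : s s' / s <= s' >-> s' <= s}.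
Proof.
move=> s s' ss'; apply: Sfun_antitone; last exact: le_max2.
by rewrite le_max lexx.
Qed.

End mass_bounded_below.

Section fluid_solution.
Variables (R : realType) (lambda : R) (theta : probability (ST R) R)
  (zeta0 : {finite_measure set (ST R) -> \bar R})
  (zeta : R -> {finite_measure set (ST R) -> \bar R}).
Hypothesis sol : fluid_solution lambda theta zeta0 zeta.

Lemma fluid_mass_Rp2 t : 0 <= t -> mass zeta t = fine (zeta t (@Rp2 R)).
Proof.
case: sol => hsupp _ t0.
by rewrite /mass (measure_setT_null_compl (@measurable_Rp2 R)) //; exact: hsupp.
Qed.

Lemma fluid_mass0 : zeta0 (~` @Rp2 R) = 0%E -> mass zeta 0 = fine (zeta0 setT).
Proof.
case: sol => _ [_ [_ heq]] z0c.
rewrite fluid_mass_Rp2 // (measure_setT_null_compl (@measurable_Rp2 R) z0c).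
have -> : @Rp2 R = closed_corner 0 0 by [].
rewrite heq //; last exact: corner_closed_corner.
rewrite shift_closed_corner Sfun_diag !addr0 (integral_Sset1 0) ?mule0 ?adde0 //.
by move=> s /=; rewrite in_itv /= => /le_anti.
Qed.

Lemma fluid_mass_cvg0 : mass zeta t @[t --> 0^'+] --> mass zeta 0.
Proof.
case: sol => _ [wc _].
pose F t := fine (\int[zeta t]_(p in @Rp2 R) (cst 1 p)%:E)%E.
have FE t : 0 <= t -> F t = mass zeta t.
  move=> t0; rewrite /F -[fun p => _]/(cst 1%:E) integral_cst; last first.
    exact: measurable_Rp2.
  by rewrite fluid_mass_Rp2 //; congr fine; exact: mul1e.
have : {within [set` `[0, +oo[], continuous F}.
  rewrite (_ : [set` _] = [set t | 0 <= t]); last first.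
    by apply/seteqP; split => t; rewrite /= in_itv /= andbT.
  apply: wc; [exact: measurable_cst | exact: cst_continuous |].
  by exists 1 => p; rewrite normr1.
move=> /continuous_within_itvcyP[_]; rewrite FE //; apply: cvg_trans.
by apply: near_eq_cvg; near=> t; rewrite FE // ltW //; near: t; exact: nbhs_right_gt.
Unshelve. all: by end_near. Qed.

Lemma fluid_mass_lower_bound : 0 < mass zeta 0 ->
  exists2 m, 0 < m & forall t, 0 <= t -> m <= mass zeta t.
Proof.
move=> mass0; case: sol => _ [_ [hlow _]].
have /(_ _ (mass zeta 0 / 2)) := @cvgr_gt R _ _ _ _ _ fluid_mass_cvg0.
rewrite ltr_pdivrMr // ltr_pMr // ltr1n => /(_ isT).
rewrite near_withinE => -[r /= r0 near0].
have [c [c0 hc]] := hlow (r / 2) (divr_gt0 r0 (ltr0Sn _ _)).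
exists (Num.min (mass zeta 0 / 2) c); first by rewrite lt_min c0 divr_gt0.
move=> t t0; rewrite ge_min; have [rt|tr] := ltP (r / 2) t; first by rewrite hc ?orbT.
apply/orP; left; have [->|tn0] := eqVneq t 0.
  by rewrite ler_pdivrMr // ler_pMr // ler1n.
apply/ltW/near0; last by rewrite lt_def tn0 t0.
by rewrite /ball_ /= sub0r normrN ger0_norm //; lra.
Qed.

Lemma fluid_closed_corner x y T : 0 <= x -> 0 <= y -> 0 <= T ->
  fine (zeta T (closed_corner x y)) =
  fine (zeta0 (closed_corner (x + Sfun zeta 0 T) (y + T))) +
  lambda * corner_integral theta (fun s => x + Sfun zeta (Num.max 0 s) T) T y.
Proof.
case: sol => _ [_ [_ heq]] x0 y0 T0.
rewrite heq //; last exact: corner_closed_corner.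
have -> : (\int[lebesgue_measure]_(s in `[0%R, T])
      theta (Defs.shift (closed_corner x y) (Sfun zeta s T) (T - s)) =
    \int[lebesgue_measure]_(s in `[0%R, T])
      (corner_profile theta (fun s => x + Sfun zeta (Num.max 0 s) T) T y s)%:E)%E.
  apply: eq_integral => s; rewrite inE /= in_itv /= => /andP[s0 _].
  by rewrite shift_closed_corner /corner_profile max_r // fineK ?fin_num_measure //;
    exact: measurable_closed_corner.
rewrite shift_closed_corner fineD ?fin_numM ?corner_integral_fin ?fin_num_measure //;
  try exact: measurable_closed_corner.
by rewrite fineM ?corner_integral_fin.
Qed.

End fluid_solution.

Theorem mainTheorem9 (R : realType) (lambda : R)
  (theta : probability (ST R) R) (zeta0 : {finite_measure set (ST R) -> \bar R})
  (L : R)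
  (zeta : R -> {finite_measure set (ST R) -> \bar R}) :
  fluid_data lambda theta zeta0 ->
  (0 < fine (zeta0 setT)) ->
  (forall x y y' : R, 0 <= x -> 0 <= y -> 0 <= y' ->
     `| fine (zeta0 (closed_corner x y)) / fine (zeta0 setT)
      - fine (zeta0 (closed_corner x y')) / fine (zeta0 setT) |
     <= L * `|y - y'|) ->
  fluid_solution lambda theta zeta0 zeta ->
  forall x y y' t : R, 0 <= x -> 0 <= y -> 0 <= y' -> 0 <= t ->
    `| fine (zeta (Stilde zeta t) (closed_corner x y))
     - fine (zeta (Stilde zeta t) (closed_corner x y')) |
    <= (fine (zeta0 setT) * L + lambda) * `|y - y'|.
Proof.
move=> [lambda_gt0 [_ [_ [_ [_ [_ [zeta0_Rp2 _]]]]]]] z0_gt0 F0_lip sol.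
move=> x y y' t x0 y0 y'0 _.
set T := Stilde zeta t; have T0 : 0 <= T := Stilde_ge0 zeta t.
have [m m_gt0 mass_ge] : exists2 m, 0 < m & forall s, 0 <= s -> m <= mass zeta s.
  by apply: (fluid_mass_lower_bound sol); rewrite (fluid_mass0 sol).
pose sigma s := x + Sfun zeta (Num.max 0 s) T.
have sigma_ni : {homo sigma : s s' / s <= s' >-> s' <= s}.
  by move=> s s' ss'; rewrite lerD2l (Sfun_max0_antitone m_gt0 mass_ge).
set z0 := fine (zeta0 setT); set S0 := Sfun zeta 0 T.
have F0_term : `|fine (zeta0 (closed_corner (x + S0) (y + T))) -
    fine (zeta0 (closed_corner (x + S0) (y' + T)))| <= z0 * L * `|y - y'|.
  set a := fine _; set a' := fine _.
  have -> : a - a' = z0 * (a / z0 - a' / z0) by field; rewrite gt_eqF.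
  rewrite normrM gtr0_norm // -mulrA ler_pM2l // (_ : y - y' = y + T - (y' + T)).
    by apply: F0_lip; rewrite ?addr_ge0 ?Sfun_ge0.
  by ring.
rewrite !(fluid_closed_corner sol) // -/S0.
rewrite (_ : forall a a' b b' : R, a + lambda * b - (a' + lambda * b') =
  (a - a') + lambda * (b - b')); last by move=> *; ring.
rewrite mulrDl; apply: le_trans (ler_normD _ _) (lerD F0_term _).
rewrite normrM gtr0_norm // ler_pM2l //.
exact: (corner_integral_lipschitz _ sigma_ni T0).
Qed.
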